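(* If $G^c$ is a connected vertex-coloured graph with $n$ vertices and $c$ colours, where $n>c\ge1$, then $\gamma^t(G^c)\le \frac{n+c-1}{2}$.
   Context: A vertex-coloured graph $G^c$ with colour set $\{1,\dots,c\}$ is a finite simple graph in which every vertex receives exactly one colour and every colour appears on at least one vertex. A dominating set is tropical if every colour appears on at least one of its vertices; $\gamma^t(G^c)$ is the minimum size of a tropical dominating set. *)

From mathcomp Require Import all_boot.
Set Implicit Arguments. Unset Strict Implicit. Unset Printing Implicit Defensive.

Definition simple_graph (T : finType) (e : rel T) : Prop :=
  symmetric e /\ irreflexive e.

Definition connected_graph (T : finType) (e : rel T) : Prop :=
  forall x y : T, connect e x y.

(* A vertex colouring with colour set {1..c} (encoded as 'I_c) in which every
   colour is used. *)
Definition vertex_colouring (T : finType) (c : nat) (col : T -> 'I_c) : Prop :=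
  forall k : 'I_c, exists v : T, col v = k.

Definition dominating (T : finType) (e : rel T) (D : {set T}) : bool :=
  [forall v, (v \in D) || [exists u in D, e u v]].

Definition tropical (T : finType) (c : nat) (col : T -> 'I_c) (D : {set T}) : bool :=
  [forall k : 'I_c, [exists v in D, col v == k]].

Definition tropical_dominating (T : finType) (e : rel T) (c : nat)
  (col : T -> 'I_c) (D : {set T}) : bool :=
  dominating e D && tropical col D.

(* gamma^t: minimum size of a tropical dominating set (the whole vertex set is
   one when every colour is used, so the default #|T| is never below it). *)
Definition tropical_domination_number (T : finType) (e : rel T) (c : nat)
  (col : T -> 'I_c) : nat :=
  \big[minn/#|T|]_(D : {set T} | tropical_dominating e col D) #|D|.

From mathcomp Require Import all_boot all_order zify.
Import Order.TTheory.

Set Implicit Arguments.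
Unset Strict Implicit.
Unset Printing Implicit Defensive.

(* Among the minimum tropical dominating sets choose D with the largest number
   of internal edges, and let K be the vertices whose colour occurs only once
   in D.  Every v in D \ K has a private neighbour outside D: D \ {v} is still
   tropical, so by minimality it fails to dominate some vertex; if that vertex
   is v itself then v has no neighbour in D, and exchanging v for a neighbour
   u (which, not being private, sees another vertex of D) yields a minimum
   tropical dominating set with more internal edges.  Private neighbours are
   distinct, so |D \ K| <= n - |D|, while |K| <= c - 1 as soon as D \ K is
   nonempty (its colours are missing from K). *)

Section TropicalDomination.

Variables (T : finType) (e : rel T) (c : nat) (col : T -> 'I_c).
Hypotheses (e_sym : symmetric e) (e_irr : irreflexive e).

Notation tdom := (tropical_dominating e col).

Definition private_neighbour (D : {set T}) (v x : T) : bool :=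
  [&& x \notin D, e v x & [forall y in D, e y x ==> (y == v)]].

Definition unique_coloured (D : {set T}) : {set T} :=
  [set v in D | [forall w in D, (col w == col v) ==> (w == v)]].

Definition inner_edges (D : {set T}) : {set T * T} :=
  [set p | [&& p.1 \in D, p.2 \in D & e p.1 p.2]].

Lemma tropical_domination_number_le (D : {set T}) :
  tdom D -> tropical_domination_number e col <= #|D|.
Proof. by move=> tdD; apply: (@bigmin_le_cond _ nat). Qed.

Lemma tropical_dominating_setT : vertex_colouring col -> tdom setT.
Proof.
move=> col_onto; apply/andP; split; first by apply/forallP => v; rewrite inE.
apply/forallP => k; have [v <-] := col_onto k.
by apply/exists_inP; exists v; rewrite ?inE.
Qed.

Lemma exists_neighbour :
  connected_graph e -> 1 < #|T| -> forall v, exists u, e v u.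
Proof.
move=> conn nT v.
have [w wv] : exists w, w != v.
  apply/existsP; apply: contraTT nT => /existsPn all_v; rewrite -leqNgt.
  rewrite -(card1 v); apply/subset_leq_card/subsetP => w _.
  by rewrite inE; apply/negPn/all_v.
have /connectP [[|u p] /= path_vw w_last] := conn v w.
  by rewrite w_last eqxx in wv.
by exists u; case/andP: path_vw.
Qed.

Lemma tropical_setD1 (D : {set T}) v :
  tropical col D -> v \in D :\: unique_coloured D -> tropical col (D :\ v).
Proof.
move=> /forallP tropD; rewrite !inE => /andP[/nandP vK vD].
have [w wD /andP[/eqP wv_col w_neq_v]] :
    exists2 w, w \in D & (col w == col v) && (w != v).
  case: vK => [/negP//|/forall_inPn [w wD]].
  by rewrite negb_imply => h; exists w.
apply/forallP => k; have /exists_inP [t tD /eqP <-] := tropD k.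
have [->|t_neq_v] := eqVneq t v.
  by apply/exists_inP; exists w; rewrite ?wv_col // !inE w_neq_v.
by apply/exists_inP; exists t; rewrite // !inE t_neq_v.
Qed.

Lemma undominated_setD1 (D : {set T}) v :
  dominating e D -> (forall x, ~~ private_neighbour D v x) ->
  ~~ dominating e (D :\ v) -> {in D, forall y, ~~ e y v}.
Proof.
move=> /forallP domD no_priv /forallPn [x]; rewrite negb_or !inE.
move=> /andP[x_out /exists_inPn x_undom].
have y_undom y : y \in D -> y != v -> ~~ e y x.
  by move=> yD y_neq_v; apply: x_undom; rewrite !inE y_neq_v yD.
have [x_eq_v|x_neq_v] := eqVneq x v.
  move=> y yD; have [->|y_neq_v] := eqVneq y v; first by rewrite e_irr.
  by rewrite -x_eq_v; apply: y_undom; rewrite ?x_eq_v.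
have xD : x \notin D by move: x_out; rewrite x_neq_v.
have /exists_inP [u uD eux] : [exists u in D, e u x].
  by move: (domD x); rewrite (negbTE xD).
have u_eq_v : u = v by apply/eqP; apply: contraTT eux; apply: y_undom.
case/negP: (no_priv x); rewrite /private_neighbour xD -u_eq_v eux /=.
apply/forall_inP => y yD; apply/implyP => eyx; rewrite u_eq_v.
by apply: contraLR eyx; apply: y_undom.
Qed.

Section Exchange.

Variables (D : {set T}) (v u : T).
Hypotheses (vD : v \in D) (uD : u \notin D) (evu : e v u).
Hypothesis v_isolated : {in D, forall y, ~~ e y v}.
Hypothesis no_priv : forall x, ~~ private_neighbour D v x.

Lemma dominating_exchange : dominating e D -> dominating e (u |: (D :\ v)).
Proof.
move=> /forallP domD; apply/forallP => z; rewrite !inE.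
have [//|z_neq_u] := eqVneq z u; have [->|z_neq_v] /= := eqVneq z v.
  by apply/exists_inP; exists u; rewrite ?inE ?eqxx // e_sym.
case zD: (z \in D) => //=.
have /exists_inP [t tD etz] : [exists t in D, e t z] by move: (domD z); rewrite zD.
have [t_eq_v|t_neq_v] := eqVneq t v; last first.
  by apply/exists_inP; exists t; rewrite // !inE t_neq_v tD orbT.
move: (no_priv z); rewrite /private_neighbour zD -t_eq_v etz /=.
move=> /forall_inPn [s sD]; rewrite negb_imply => /andP[esz s_neq_t].
by apply/exists_inP; exists s; rewrite // !inE t_eq_v -t_eq_v s_neq_t sD orbT.
Qed.

Lemma card_exchange : #|u |: (D :\ v)| = #|D|.
Proof. by rewrite cardsU1 !inE (negbTE uD) andbF (cardsD1 v D) vD. Qed.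

Lemma inner_edges_exchange :
  #|inner_edges D| < #|inner_edges (u |: (D :\ v))|.
Proof.
have [y yD /andP[eyu y_neq_v]] : exists2 y, y \in D & e y u && (y != v).
  move: (no_priv u); rewrite /private_neighbour uD evu /= => /forall_inPn [y yD].
  by rewrite negb_imply => h; exists y.
apply/proper_card/properP; split.
  apply/subsetP => -[a b]; rewrite !inE /= => /and3P[aD bD eab].
  have a_neq_v : a != v by apply: contraNneq _ (v_isolated bD) => <-; rewrite e_sym.
  have b_neq_v : b != v by apply: contraNneq _ (v_isolated aD) => <-.
  by rewrite a_neq_v b_neq_v aD bD eab !orbT.
exists (u, y); first by rewrite !inE /= eqxx y_neq_v yD e_sym eyu orbT.
by rewrite !inE /= (negbTE uD).
Qed.

End Exchange.

Lemma exists_private_neighbour (D : {set T}) v :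
  connected_graph e -> 1 < #|T| ->
  tdom D -> (forall X, tdom X -> #|D| <= #|X|) ->
  (forall X, tdom X -> #|X| <= #|D| -> #|inner_edges X| <= #|inner_edges D|) ->
  v \in D :\: unique_coloured D -> exists x, private_neighbour D v x.
Proof.
move=> conn nT /andP[domD tropD] Dmin Dmax vDK.
have vD : v \in D by case/setDP: vDK.
apply/existsP; apply: contraT => /existsPn no_priv.
have trop_v := tropical_setD1 tropD vDK.
have not_dom_v : ~~ dominating e (D :\ v).
  apply/negP => dom_v; have := Dmin _ (introT andP (conj dom_v trop_v)).
  by rewrite (cardsD1 v D) vD; lia.
have v_isolated := undominated_setD1 domD no_priv not_dom_v.
have [u evu] := exists_neighbour conn nT v.
have uD : u \notin D by apply/negP => uD; move: (v_isolated u uD); rewrite e_sym evu.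
have tdom_exchange : tdom (u |: (D :\ v)).
  apply/andP; split; first exact: dominating_exchange.
  apply/forallP => k; have /exists_inP [t tD tk] := forallP trop_v k.
  by apply/exists_inP; exists t; rewrite // inE tD orbT.
have := Dmax _ tdom_exchange; rewrite (card_exchange vD uD) => /(_ (leqnn _)).
by rewrite leqNgt (inner_edges_exchange uD evu v_isolated no_priv).
Qed.

Lemma card_private_le (D A : {set T}) :
  A \subset D -> (forall v, v \in A -> exists x, private_neighbour D v x) ->
  #|A| <= #|~: D|.
Proof.
move=> sAD has_priv; pose p v := odflt v [pick x | private_neighbour D v x].
have pP v : v \in A -> private_neighbour D v (p v).
  move=> vA; have [x px] := has_priv v vA.
  by rewrite /p; case: pickP => [//|/(_ x)]; rewrite px.
have p_inj : {in A &, injective p}.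
  move=> v w vA wA pvw; have /and3P[_ evp _] := pP v vA.
  have /and3P[_ _ /forall_inP only_w] := pP w wA.
  by apply/eqP; have := only_w v (subsetP sAD v vA); rewrite -pvw evp.
rewrite -(card_in_imset p_inj); apply/subset_leq_card/subsetP => _ /imsetP[v vA ->].
by rewrite inE; case/and3P: (pP v vA).
Qed.

Lemma unique_coloured_sub (D : {set T}) : unique_coloured D \subset D.
Proof. by apply/subsetP => v; rewrite inE => /andP[]. Qed.

Lemma col_inj_unique_coloured (D : {set T}) : {in unique_coloured D &, injective col}.
Proof.
move=> v w; rewrite !inE => /andP[_ /forall_inP only_v] /andP[wD _] col_vw.
by apply/eqP; rewrite eq_sym; have := only_v w wD; rewrite col_vw eqxx.
Qed.

Lemma card_unique_coloured_le (D : {set T}) : #|unique_coloured D| <= c.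
Proof.
rewrite -(card_in_imset (@col_inj_unique_coloured D)) -[c in _ <= c]card_ord.
exact: max_card.
Qed.

Lemma card_unique_coloured_lt (D : {set T}) v :
  v \in D :\: unique_coloured D -> #|unique_coloured D| < c.
Proof.
rewrite inE => /andP[vK vD].
rewrite -(card_in_imset (@col_inj_unique_coloured D)) -[c in _ < c]card_ord.
apply/proper_card/properP; split; first exact/subsetP.
exists (col v) => //; apply/imsetP => -[k]; rewrite inE => /andP[kD /forall_inP only_k].
move=> col_vk; have /eqP v_eq_k : v == k by have := only_k v vD; rewrite col_vk eqxx.
by move: vK; rewrite v_eq_k inE kD; apply/negP/negPn/forall_inP.
Qed.

Lemma double_card_le (D : {set T}) : c < #|T| ->
  (forall v, v \in D :\: unique_coloured D -> exists x, private_neighbour D v x) ->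
  2 * #|D| <= #|T| + c - 1.
Proof.
move=> c_lt_n has_priv.
have := card_private_le (subsetDl D (unique_coloured D)) has_priv.
have := cardsC D; have := cardsID (unique_coloured D) D.
rewrite (setIidPr (unique_coloured_sub D)).
have [DK0|[v vDK]] := set_0Vmem (D :\: unique_coloured D).
  by rewrite DK0 cards0; have := card_unique_coloured_le D; lia.
by have := card_unique_coloured_lt vDK; lia.
Qed.

End TropicalDomination.

Theorem mainTheorem4 (T : finType) (e : rel T) (c : nat) (col : T -> 'I_c) :
  simple_graph e -> connected_graph e -> vertex_colouring col ->
  1 <= c -> c < #|T| ->
  2 * tropical_domination_number e col <= #|T| + c - 1.
Proof.
move=> [e_sym e_irr] conn col_onto c_pos c_lt_n.
have [D0 tdD0 D0min] :=
  arg_minnP (fun D : {set T} => #|D|) (tropical_dominating_setT e col_onto).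
pose small_tdom X := tropical_dominating e col X && (#|X| <= #|D0|).
have small_D0 : small_tdom D0 by rewrite /small_tdom tdD0 leqnn.
have [D /andP[tdD D_le_D0] Dmax] :=
  @arg_maxnP _ D0 small_tdom (fun D => #|inner_edges e D|) small_D0.
have Dmin X : tropical_dominating e col X -> #|D| <= #|X|.
  by move=> tdX; apply: leq_trans D_le_D0 (D0min _ tdX).
have Dmax_inner X : tropical_dominating e col X -> #|X| <= #|D| ->
    #|inner_edges e X| <= #|inner_edges e D|.
  by move=> tdX X_le; apply: Dmax; rewrite /small_tdom tdX (leq_trans X_le D_le_D0).
have has_priv := exists_private_neighbour e_sym e_irr conn
  (leq_ltn_trans c_pos c_lt_n) tdD Dmin Dmax_inner.
apply: leq_trans (double_card_le c_lt_n has_priv).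
by rewrite leq_mul2l tropical_domination_number_le ?orbT.
Qed.
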